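(* Let $n\ge m\ge 1$ and consider a Lagrangian $$L=L_0(\dot q^I,q^I)+\lambda^a C_a(\dot q^I,q^I),\qquad I=1,\dots,n,\quad a=1,\dots,m,$$ with dynamical variables $q^I(t)$, Lagrange multipliers $\lambda^a(t)$ (whose time derivatives do not appear in $L$), and constraints $C_a=0$ (summation over repeated indices). Write $L_{IJ}=\partial^2 L/\partial\dot q^I\partial\dot q^J$, $L^{IJ}$ for its inverse, and $C_{aI}=\partial C_a/\partial \dot q^I$. Assume: 1. (Nondegeneracy) $\det(L_{IJ})\neq 0$ on the constraint surface $C_a=0$. Then the equations $p_I=\partial L/\partial\dot q^I$ can be solved (locally) for $\dot q^I=\dot q^I(q^J,p_J,\lambda^b)$. 2. (The constraints do not reduce the phase space dimension of $q^I$) $\det(M_{ab})\neq 0$ on the constraint surface, where $M_{ab}=C_{aI}L^{IJ}C_{bJ}$. Then the constraints $C_a(\dot q^I(q,p,\lambda),q^I)=0$ can be solved (locally) for $\lambda^a=F^a(q^I,p_I)$. 3. Either (a) there is no point satisfying $C_a=0$ for all $a$ together with $\dot q^I=0$ and $\partial L/\partial q^I=0$ for all $I$; or (b) at every point satisfying $C_a=0$, $\dot q^I=0$ and $\partial L/\partial q^I=0$ (for all $a,I$), the $m\times n$ matrix $\left.\partial C_a/\partial q^I\right|_{\lambda=F}$ is not the zero matrix (i.e. at least one constraint depends on $q^I$ there). Then the on-shell Hamiltonian $$H_{\text{on-shell}}(q^I,p_I)=\dot q^I_{\lambda=F}\,p_I-L_0(\dot q^I_{\lambda=F},q^I),\qquad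 \dot q^I_{\lambda=F}=\dot q^I(q^J,p_J,\lambda^b)\big|_{\lambda=F},$$ regarded as a function of the independent phase-space variables $(q^I,p_I)$, has neither a local minimum nor a local maximum (in the interior of its domain).
   Context: This is a statement in finite-dimensional Lagrangian/Hamiltonian mechanics. $p_I=\partial L/\partial\dot q^I$ are the canonical momenta conjugate to $q^I$; the momenta conjugate to $\lambda^a$ vanish identically (primary constraints), and requiring their preservation in time yields the secondary constraints $C_a\approx 0$, which under condition 2 fix $\lambda^a=F^a(q,p)$, leaving all $2n$ variables $(q^I,p_I)$ unconstrained. The on-shell Hamiltonian is the canonical Hamiltonian $\dot q^I p_I-L$ restricted to this constraint surface (where the term $\lambda^aC_a$ vanishes). A local minimum/maximum means a local extremum of $H_{\text{on-shell}}$ as a function of $(q^I,p_I)$; points on the boundary of the domain of $(q^I,p_I)$ are not considered. *)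

From HB Require Import structures.
From mathcomp Require Import all_boot all_order all_algebra.
From mathcomp Require Import all_classical all_reals all_analysis.
Set Implicit Arguments. Unset Strict Implicit. Unset Printing Implicit Defensive.
Import Order.TTheory GRing.Theory Num.Theory.
Import numFieldNormedType.Exports.
Local Open Scope classical_set_scope.
Local Open Scope ring_scope.

Section Mech.
Variable R : realType.

Definition ebasis (n : nat) (I : 'I_n) : 'rV[R]_n := delta_mx 0 I.

Definition C1_on (V : normedModType R) (O : set V) (f : V -> R) : Prop :=
  (forall z, O z -> differentiable f z) /\
  (forall v z, O z -> {for z, continuous (fun w => 'D_v f w)}).

Definition C2_on (V : normedModType R) (O : set V) (f : V -> R) : Prop :=
  C1_on O f /\ (forall v, C1_on O (fun w => 'D_v f w)).

(* A Lagrangian L0(qdot, q) and constraints C_a(qdot, q) are functions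
   'rV_n -> 'rV_n -> R, first argument qdot, second argument q. *)

Definition dqdot (n : nat) (f : 'rV[R]_n -> 'rV[R]_n -> R) (I : 'I_n)
  (qd q : 'rV[R]_n) : R := 'D_(ebasis I) (fun y => f y q) qd.

Definition dq (n : nat) (f : 'rV[R]_n -> 'rV[R]_n -> R) (I : 'I_n)
  (qd q : 'rV[R]_n) : R := 'D_(ebasis I) (fun y => f qd y) q.

Definition Lfull (n m : nat) (L0 : 'rV[R]_n -> 'rV[R]_n -> R)
  (C : 'I_m -> 'rV[R]_n -> 'rV[R]_n -> R) (lam : 'rV[R]_m)
  (qd q : 'rV[R]_n) : R :=
  L0 qd q + \sum_(a < m) lam 0 a * C a qd q.

Definition Lhess (n m : nat) L0 C (lam : 'rV[R]_m) (qd q : 'rV[R]_n)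
  : 'M[R]_n :=
  \matrix_(I < n, J < n)
     dqdot (fun y z => dqdot (@Lfull n m L0 C lam) J y z) I qd q.

Definition Cqdot (n m : nat) (C : 'I_m -> 'rV[R]_n -> 'rV[R]_n -> R)
  (qd q : 'rV[R]_n) : 'M[R]_(m, n) :=
  \matrix_(a < m, I < n) dqdot (C a) I qd q.

Definition Mmat (n m : nat) L0 C (lam : 'rV[R]_m) (qd q : 'rV[R]_n)
  : 'M[R]_m :=
  Cqdot C qd q *m invmx (@Lhess n m L0 C lam qd q) *m (Cqdot C qd q)^T.

(* On-shell Hamiltonian H(q,p) = qdot^I p_I - L0(qdot, q), with qdot = V(q,p) *)
Definition Honshell (n : nat) (L0 : 'rV[R]_n -> 'rV[R]_n -> R)
  (V : 'rV[R]_n * 'rV[R]_n -> 'rV[R]_n) (x : 'rV[R]_n * 'rV[R]_n) : R :=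
  \sum_(I < n) V x 0 I * x.2 0 I - L0 (V x) x.1.

Definition is_local_min (T : topologicalType) (f : T -> R) (x0 : T) : Prop :=
  \forall x \near x0, f x0 <= f x.
Definition is_local_max (T : topologicalType) (f : T -> R) (x0 : T) : Prop :=
  \forall x \near x0, f x <= f x0.

End Mech.

From HB Require Import structures.
From mathcomp Require Import all_boot all_order all_algebra.
From mathcomp Require Import all_classical all_reals all_analysis.
From mathcomp Require Import ring lra.
Import Order.TTheory GRing.Theory Num.Theory.
Import numFieldNormedType.Exports.
Local Open Scope classical_set_scope.
Local Open Scope ring_scope.
Set Implicit Arguments. Unset Strict Implicit. Unset Printing Implicit Defensive.

(* On the constraint surface the on-shell Hamiltonian equals
   qdot.p - L_lambda(qdot, q) for any frozen multipliers lambda, and the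
   relation p = dL/dqdot cancels the variation of qdot, so that
   dH = qdot.dp - (dL/dq).dq.  At a local extremum this forces qdot = 0 and
   dL/dq = 0, and condition 3 then yields a constraint with
   c = dC_a/dq^I <> 0.  Differentiating C_a(qdot(q, p), q) = 0 shows that
   qdot.w, with w = dC_a/dqdot, varies like -c along q^I.  Hence moving q^I by
   eps changes H by O(eps^2), while moving p afterwards by kappa * eps * w
   changes it by -kappa c eps^2 + o(eps^2); choosing the sign and size of
   kappa produces increments of both signs. *)

Section DirectionalCalculus.
Context {R : realType} {E : normedModType R}.
Implicit Types (f : E -> R) (x h : E).

Lemma near_line (x h : E) (t0 : R) (P : E -> Prop) :
  (\forall y \near x + t0 *: h, P y) -> \forall t \near t0, P (x + t *: h).
Proof.
have line_cont : continuous (fun t : R => x + t *: h).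
  move=> t; apply: (@continuousD _ _ _ (cst x) (fun t : R => t *: h)).
    exact: cst_continuous.
  exact: scalel_continuous.
exact: line_cont.
Qed.

Lemma is_derive_line f x h t0 l :
  is_derive (x + t0 *: h) h f l -> is_derive t0 1 (fun t => f (x + t *: h)) l.
Proof.
move=> [fd <-].
have quotE : (fun s : R => s^-1 *: (f (x + (s *: 1 + t0) *: h) - f (x + t0 *: h)))
    = (fun s : R => s^-1 *: (f (s *: h + (x + t0 *: h)) - f (x + t0 *: h))).
  by apply/funext => s; rewrite [s *: 1]mulr1 scalerDl addrCA.
by apply: DeriveDef; rewrite /derivable /derive /= quotE.
Qed.

Lemma near0_line x h (P : E -> Prop) :
  (\forall y \near x, P y) -> \forall t \near (0 : R), P (x + t *: h).
Proof. by rewrite -{1}[x](addr0 x) -(scale0r h); exact: near_line. Qed.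

Lemma is_derive_local_min f x h l : is_derive x h f l ->
  (\forall y \near x, derivable f y h) -> is_local_min f x -> l = 0.
Proof.
move=> fl fd fmin.
pose phi t := f (x + t *: h).
have phi0 : phi 0 = f x by rewrite /phi scale0r addr0.
have : \forall t \near 0, derivable phi t 1 /\ phi 0 <= phi t.
  apply: filterS (near0_line h (filterI fd fmin)) => t [dt mt].
  by rewrite phi0; split=> //; have [] := is_derive_line (derivableP dt).
move=> /nbhs_normP [e /= e0 He].
have inball t : t \in `]-e, e[ -> derivable phi t 1 /\ phi 0 <= phi t.
  rewrite in_itv /= => tin; apply: He.
  by rewrite /ball_ /= sub0r normrN ltr_norml.
have e_sym : - e <= e by rewrite (le_trans _ (ltW e0)) // oppr_le0 ltW.
have e_in : (0 : R) \in `]-e, e[ by rewrite in_itv /= oppr_lt0 e0.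
have := derive1_at_min e_sym (fun t tin => (inball t tin).1) e_in
  (fun t tin => (inball t tin).2).
rewrite -{1}[x](addr0 x) -(scale0r h) in fl.
by have := is_derive_line fl; move=> [_ <-] [].
Qed.

Lemma is_derive_local_extremum f x h l : is_derive x h f l ->
  (\forall y \near x, derivable f y h) ->
  is_local_min f x \/ is_local_max f x -> l = 0.
Proof.
move=> fl fd [fmin|fmax]; first exact: is_derive_local_min fl fd fmin.
apply/eqP; rewrite -oppr_eq0; apply/eqP.
apply: (is_derive_local_min (is_deriveN fl)).
  by apply: filterS fd => y; exact: derivableN.
by apply: filterS fmax => y; rewrite /= lerN2.
Qed.

Lemma MVT_origin (f df : R -> R) (e : R) :
  (forall t : R, `|t| <= `|e| -> is_derive t (1 : R) f (df t)) ->
  exists2 xi, `|xi| <= `|e| & f e - f 0 = df xi * e.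
Proof.
move=> fd.
have mvt a b : a <= b -> (forall t, a <= t <= b -> `|t| <= `|e|) ->
    exists2 xi, `|xi| <= `|e| & f b - f a = df xi * (b - a).
  move=> ab inab; have [||xi + ->] := MVT_segment (f := f) (df := df) ab.
  - by move=> t /[!in_itv] /= /andP [? ?]; apply/fd/inab; rewrite !ltW.
  - apply: derivable_within_continuous => t /[!in_itv] /= tab.
    by have [] := fd t (inab t tab).
  - by rewrite in_itv /= => /inab; exists xi.
have [e0|e0] := leP 0 e.
  have [|xi xi_le fE] := mvt 0 e e0; last by exists xi; rewrite // fE subr0.
  by move=> t /andP [t0 te]; rewrite !ger0_norm // (le_trans t0 te).
have [|xi xi_le fE] := mvt e 0 (ltW e0).
  by move=> t /andP [et t0]; rewrite (ltr0_norm e0) ler0_norm // lerN2.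
by exists xi => //; rewrite -opprB fE sub0r mulrN opprK.
Qed.

Lemma MVT_dir_le f (df : E -> R) x h (e a B : R) :
  (forall t, `|t| <= `|e| ->
     is_derive (x + t *: h) h f (df (x + t *: h)) /\ `|df (x + t *: h) - a| <= B) ->
  `|f (x + e *: h) - f x - a * e| <= B * `|e|.
Proof.
move=> fd; have := MVT_origin (fun t te => is_derive_line (fd t te).1).
rewrite scale0r addr0 => -[xi xie ->].
by rewrite -mulrBl normrM; apply: ler_wpM2r => //; exact: (fd xi xie).2.
Qed.

Lemma nbhs_right0_mulr_lt (a d : R) : 0 <= a -> 0 < d ->
  \forall eps \near 0^'+, eps * a < d.
Proof.
move=> a0 d0; have a1 : 0 < a + 1 by rewrite ltr_wpDl.
apply: filterS (filterI (nbhs_right_gt 0) (nbhs_right_lt (divr_gt0 d0 a1))).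
move=> eps [/= eps0]; rewrite ltr_pdivlMr // => lt_d.
by apply: le_lt_trans lt_d; apply: ler_wpM2l; rewrite ?lerDl // ltW.
Qed.

Lemma diff_remainder_le (F : normedModType R) (g : E -> F) x (e : R) :
  differentiable g x -> 0 < e ->
  \forall k \near 0, `|g (x + k) - g x - 'd g x k| <= e * `|k|.
Proof.
move=> dg e0; move/eqaddoP: (diff_locally dg) => /(_ e e0).
by apply: filterS => k; rewrite /= opprD addrA (addrC x).
Qed.

Lemma diff_increment_le (g : E -> R) x : differentiable g x ->
  exists2 K, 0 <= K & \forall k \near 0, `|g (x + k) - g x| <= K * `|k|.
Proof.
move=> dg; have [K K0 dgK] := linear_lipschitz (diff_continuous dg).
exists (1 + K); first by rewrite addr_ge0 // ltW.
apply: filterS (diff_remainder_le dg ltr01) => k rem.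
rewrite -[g _ - _](subrK ('d g x k)) mulrDl.
exact: le_trans (ler_normD _ _) (lerD rem (dgK k)).
Qed.
End DirectionalCalculus.

(** * A saddle criterion *)

Section Saddle.
Context {R : realType} {E : normedModType R}.
Variables (f psi g : E -> R) (x0 u w : E).
Hypotheses (fd : \forall y \near x0, is_derive y u f (psi y) /\ is_derive y w f (g y))
  (dpsi : differentiable psi x0) (psi0 : psi x0 = 0)
  (dg : differentiable g x0) (g0 : g x0 = 0) (dgw : 'd g x0 w = 0).

Lemma saddle_step_u : exists2 K, 0 <= K &
  \forall eps \near 0^'+, `|f (x0 + eps *: u) - f x0| <= K * eps ^+ 2.
Proof.
have [K K0 psiK] := diff_increment_le dpsi.
have : \forall k \near 0,
    is_derive (x0 + k) u f (psi (x0 + k)) /\ `|psi (x0 + k)| <= K * `|k|.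
  apply: filterS (filterI ((nbhs0P _ _).1 fd) psiK) => k [[du _]].
  by rewrite psi0 subr0.
move=> /nbhs_normP [d /= d0 near_d].
exists (K * `|u|); first by rewrite mulr_ge0.
near=> eps.
have eps0 : 0 < eps by near: eps; exact: nbhs_right_gt.
have eps_d : eps * `|u| < d by near: eps; exact: nbhs_right0_mulr_lt.
rewrite -[f _ - f x0]subr0 -(mul0r eps).
apply: le_trans (MVT_dir_le (df := psi) (B := K * (eps * `|u|)) _) _.
  move=> t; rewrite (gtr0_norm eps0) subr0 => te.
  have tu : `|t *: u| <= eps * `|u| by rewrite normrZ; apply: ler_wpM2r.
  have [|du pk] := near_d (t *: u).
    by rewrite /ball_ /= sub0r normrN (le_lt_trans tu).
  by split=> //; apply: le_trans pk (ler_wpM2l K0 tu).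
by rewrite (gtr0_norm eps0) expr2 !mulrA [K * _ * _]mulrAC.
Unshelve. all: by end_near.
Qed.

Lemma saddle_step_w (kappa eta : R) : 0 < eta ->
  \forall eps \near 0^'+, `|f (x0 + eps *: u + (kappa * eps) *: w)
      - f (x0 + eps *: u) - kappa * 'd g x0 u * eps ^+ 2|
    <= eta * `|kappa| * (`|u| + `|kappa| * `|w|) * eps ^+ 2.
Proof.
move=> eta0; set c := 'd g x0 u; set N := `|u| + `|kappa| * `|w|.
have N0 : 0 <= N by rewrite addr_ge0 ?mulr_ge0.
have : \forall k \near 0,
    is_derive (x0 + k) w f (g (x0 + k)) /\ `|g (x0 + k) - 'd g x0 k| <= eta * `|k|.
  apply: filterS (filterI ((nbhs0P _ _).1 fd) (diff_remainder_le dg eta0)).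
  by move=> k [[_ dw]]; rewrite g0 subr0.
move=> /nbhs_normP [d /= d0 near_d].
near=> eps.
have eps0 : 0 < eps by near: eps; exact: nbhs_right_gt.
have eps_d : eps * N < d by near: eps; exact: nbhs_right0_mulr_lt.
have -> : kappa * c * eps ^+ 2 = eps * c * (kappa * eps) by ring.
have -> : eta * `|kappa| * N * eps ^+ 2 = eta * (eps * N) * `|kappa * eps|.
  by rewrite normrM (gtr0_norm eps0); ring.
apply: (MVT_dir_le (df := g)) => s; rewrite normrM (gtr0_norm eps0) => se.
have k_le : `|eps *: u + s *: w| <= eps * N.
  apply: le_trans (ler_normD _ _) _.
  rewrite !normrZ (gtr0_norm eps0) mulrDr lerD // mulrA [eps * _]mulrC.
  exact: ler_wpM2r.
have [|dw gk] := near_d (eps *: u + s *: w).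
  by rewrite /ball_ /= sub0r normrN (le_lt_trans k_le).
have dg_k : 'd g x0 (eps *: u + s *: w) = eps * c.
  by rewrite linearD !linearZ /= dgw scaler0 addr0.
rewrite -addrA -dg_k; split=> //.
exact: le_trans gk (ler_wpM2l (ltW eta0) k_le).
Unshelve. all: by end_near.
Qed.

Lemma saddle_not_local_min : 'd g x0 u != 0 -> ~ is_local_min f x0.
Proof.
move=> c0 fmin; set c := 'd g x0 u in c0.
have [K K0 step_u] := saddle_step_u.
(* The second step then contributes -2 (K + 1) eps^2, which beats the
   K eps^2 of the first one and the o(eps^2) error of the second. *)
set kappa := - (2 * (K + 1)) / c.
have kappa_c : kappa * c = - (2 * (K + 1)) by rewrite divfK.
set N := `|u| + `|kappa| * `|w|.
have N0 : 0 <= N by rewrite addr_ge0 ?mulr_ge0.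
set eta := (`|kappa| * N + 1)^-1.
have eta0 : 0 < eta by rewrite invr_gt0 ltr_wpDl // mulr_ge0.
have eta_le : eta * `|kappa| * N <= 1.
  by rewrite -mulrA mulrC ler_pdivrMr ?mul1r ?lerDl // ltr_wpDl // mulr_ge0.
have step_w := saddle_step_w kappa eta0.
have fmin_line : \forall eps \near 0^'+,
    f x0 <= f (x0 + eps *: u + (kappa * eps) *: w).
  apply: cvg_within; apply: filterS (near0_line (u + kappa *: w) fmin) => eps.
  by rewrite scalerDr scalerA mulrC addrA.
suff : \forall eps \near (0 : R)^'+, False by move=> /filter_ex [].
apply: filterS (filterI (nbhs_right_gt 0)
  (filterI step_u (filterI step_w fmin_line))).
move=> eps [/= eps0 [incr_u [incr_w min_eps]]].
rewrite -/c -/N kappa_c in incr_w.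
have e20 : 0 < eps ^+ 2 by rewrite exprn_gt0.
have eta_e2 : eta * `|kappa| * N * eps ^+ 2 <= eps ^+ 2.
  by rewrite -[X in _ <= X]mul1r; apply: ler_wpM2r => //; exact: ltW.
have Ke2 : 0 <= K * eps ^+ 2 by rewrite mulr_ge0 // ltW.
move: incr_u incr_w => /ler_normlP [_ incr_u] /ler_normlP [_ incr_w].
lra.
Qed.
End Saddle.

Section SaddleExtremum.
Context {R : realType} {E : normedModType R}.

Lemma saddle_not_local_extremum (f psi g : E -> R) (x0 u w : E) :
  (\forall y \near x0, is_derive y u f (psi y) /\ is_derive y w f (g y)) ->
  differentiable psi x0 -> psi x0 = 0 ->
  differentiable g x0 -> g x0 = 0 -> 'd g x0 w = 0 -> 'd g x0 u != 0 ->
  ~ is_local_min f x0 /\ ~ is_local_max f x0.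
Proof.
move=> fd dpsi psi0 dg g0 dgw c0; split.
  exact: saddle_not_local_min fd dpsi psi0 dg g0 dgw c0.
move=> fmax; apply: (@saddle_not_local_min _ _ (- f) (- psi) (- g) x0 u w).
- by apply: filterS fd => y [du dw]; split; exact: is_deriveN.
- exact: differentiableN.
- by rewrite opprfctE psi0 oppr0.
- exact: differentiableN.
- by rewrite opprfctE g0 oppr0.
- by rewrite diffN // opprfctE dgw oppr0.
- by rewrite diffN // opprfctE oppr_eq0.
- by apply: filterS fmax => y; rewrite /= lerN2.
Qed.
End SaddleExtremum.

Section ProductDerivatives.
Context {R : realType} {E F W : normedModType R}.

Lemma is_diff_linear (D G : normedModType R) (f : D -> G) (x : D) :
  linear f -> continuous f -> is_diff x f f.
Proof.
move=> f_lin f_cont.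
pose fL : {linear D -> G} := HB.pack f (GRing.isLinear.Build _ _ _ _ _ f_lin).
have fL_cont : continuous fL by [].
apply: DiffDef; first exact: (@linear_differentiable _ _ _ fL x fL_cont).
exact: (diff_lin x fL_cont).
Qed.

Lemma is_diff_fst (x : E * F) : is_diff x fst fst.
Proof. by apply: is_diff_linear => // y; exact: cvg_fst. Qed.

Lemma is_diff_snd (x : E * F) : is_diff x snd snd.
Proof. by apply: is_diff_linear => // y; exact: cvg_snd. Qed.

Lemma linear_pair_split (l : {linear (E * F)%type -> W}) v w :
  l (v, w) = l (v, 0) + l (0, w).
Proof.
have vw : (v, 0) + (0, w) = (v + 0, 0 + w) :> E * F by [].
by rewrite addr0 add0r in vw; rewrite -vw linearD.
Qed.

Lemma derive_fst_slice (f : E * F -> W) a b v : differentiable f (a, b) ->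
  'D_v (fun y => f (y, b)) a = 'd f (a, b) (v, 0).
Proof.
move=> df; have dp : differentiable (fun y : E => (y, b)) a.
  exact: differentiable_pair.
rewrite -[fun y => f (y, b)]/(f \o fun y => (y, b)).
rewrite deriveE; last exact: differentiable_comp.
by rewrite diff_comp // diff_pair //= diff_cst diff_val.
Qed.

Lemma derive_snd_slice (f : E * F -> W) a b v : differentiable f (a, b) ->
  'D_v (fun y => f (a, y)) b = 'd f (a, b) (0, v).
Proof.
move=> df; have dp : differentiable (fun y : F => (a, y)) b.
  exact: differentiable_pair.
rewrite -[fun y => f (a, y)]/(f \o fun y => (a, y)).
rewrite deriveE; last exact: differentiable_comp.
by rewrite diff_comp // diff_pair //= diff_cst diff_val.
Qed.
End ProductDerivatives.

Section RowPairing.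
Context {R : realType} {n : nat}.
Local Notation rV := 'rV[R]_n.

Definition dotr (u v : rV) : R := \sum_(I < n) u 0 I * v 0 I.

Lemma dotr0 (u : rV) : dotr u 0 = 0.
Proof. by rewrite /dotr big1 // => I _; rewrite mxE mulr0. Qed.

Lemma dot0r (v : rV) : dotr 0 v = 0.
Proof. by rewrite /dotr big1 // => I _; rewrite mxE mul0r. Qed.

Lemma dotr_ebasis (v : rV) J : dotr v (ebasis R J) = v 0 J.
Proof.
rewrite /dotr (bigD1 J) //= big1 ?addr0 => [|I /negbTE IJ].
  by rewrite mxE !eqxx mulr1.
by rewrite mxE IJ andbF mulr0.
Qed.

Lemma differentiable_dotr_l (v M : rV) : differentiable (dotr ^~ v) M.
Proof.
have -> : dotr ^~ v = \sum_(I < n) ((fun N : rV => N 0 I) * cst (v 0 I)).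
  by rewrite fct_sumE.
apply: differentiable_sum => I; apply: differentiableM => //.
exact: differentiable_coord.
Qed.

Lemma is_derive_dotr {E : normedModType R} (A B : E -> rV) x h :
  derivable A x h -> derivable B x h ->
  is_derive x h (fun z => dotr (A z) (B z))
    (dotr ('D_h A x) (B x) + dotr (A x) ('D_h B x)).
Proof.
move=> dA dB.
have coord (M : E -> rV) I : derivable M x h ->
    is_derive x h (fun z => M z 0 I) ('D_h M x 0 I).
  move=> dM; rewrite (derive_mx dM) mxE.
  exact/derivableP/((derivable_mxP _ _ _).1 dM 0 I).
have -> : (fun z => dotr (A z) (B z)) =
    \sum_(I < n) ((fun z => A z 0 I) * (fun z => B z 0 I)).
  by rewrite fct_sumE.
apply: is_derive_eq.
  by apply: is_derive_sum => I; apply: is_deriveM; exact: coord.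
rewrite /dotr -big_split; apply: eq_bigr => I _ /=.
by rewrite addrC [_ * B x 0 I]mulrC.
Qed.

Lemma diff_qdot_sum (f : rV -> rV -> R) qd q d :
  differentiable (fun z : rV * rV => f z.1 z.2) (qd, q) ->
  'd (fun z : rV * rV => f z.1 z.2) (qd, q) (d, 0) = \sum_J d 0 J * dqdot f J qd q.
Proof.
move=> df; have dp : differentiable (fun y : rV => (y, q)) qd.
  exact: differentiable_pair.
have dslice : differentiable (fun y => f y q) qd.
  exact: (differentiable_comp dp df).
rewrite -derive_fst_slice // deriveE // {1}(row_sum_delta d) linear_sum.
by apply: eq_bigr => J _; rewrite linearZ /= -deriveE.
Qed.

Lemma dq_diff (f : rV -> rV -> R) qd q I :
  differentiable (fun z : rV * rV => f z.1 z.2) (qd, q) ->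
  dq f I qd q = 'd (fun z : rV * rV => f z.1 z.2) (qd, q) (0, ebasis R I).
Proof. exact: derive_snd_slice. Qed.
End RowPairing.

(** * The on-shell Hamiltonian *)

Section OnShell.
Variables (R : realType) (n m : nat).
Local Notation rV := 'rV[R]_n.
Local Notation P := (rV * rV)%type.
Variables (L0 : rV -> rV -> R) (C : 'I_m -> rV -> rV -> R)
  (Omega U : set P) (V : P -> rV) (F : P -> 'rV[R]_m).
Hypotheses (HL : C2_on Omega (fun z => L0 z.1 z.2))
  (HC : forall a, C2_on Omega (fun z => C a z.1 z.2))
  (HU : open U)
  (HV : forall x, U x -> differentiable V x)
  (HF : forall x, U x -> differentiable F x)
  (HVO : forall x, U x -> Omega (V x, x.1))
  (Hp : forall x, U x ->
     forall I, x.2 0 I = dqdot (Lfull L0 C (F x)) I (V x) x.1)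
  (Hc : forall x, U x -> forall a, C a (V x) x.1 = 0).

Definition L0t (z : P) : R := L0 z.1 z.2.
Definition Ct a (z : P) : R := C a z.1 z.2.
Definition Lag (lam : 'rV[R]_m) (z : P) : R := Lfull L0 C lam z.1 z.2.
Definition tangent (x : P) : P := (V x, x.1).
(* The derivative of L_(F x) at [tangent x] along v, written so that its
   differentiability in x is visible. *)
Definition dLag (v x : P) : R :=
  'D_v L0t (tangent x) + \sum_(a < m) F x 0 a * 'D_v (Ct a) (tangent x).

Lemma near_U x : U x -> \forall y \near x, U y.
Proof. by move=> Ux; apply: open_nbhs_nbhs. Qed.

Lemma LagE lam : Lag lam = L0t + \sum_(a < m) (cst (lam 0 a) * Ct a).
Proof. by apply/funext => z; rewrite /Lag /Lfull fct_sumE. Qed.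

Lemma differentiable_Lag lam z : Omega z -> differentiable (Lag lam) z.
Proof.
move=> Oz; rewrite LagE; apply: differentiableD; first exact: HL.1.1.
by apply: differentiable_sum => a; apply: differentiableM => //; exact: (HC a).1.1.
Qed.

Lemma diff_Lag_tangent x v : U x -> 'd (Lag (F x)) (tangent x) v = dLag v x.
Proof.
move=> Ux; have Ot := HVO Ux.
have dCt a : differentiable (cst (F x 0 a) * Ct a) (tangent x).
  by apply: differentiableM => //; exact: (HC a).1.1.
rewrite -deriveE; last exact: differentiable_Lag.
rewrite LagE deriveD; last 2 first.
- exact/diff_derivable/HL.1.1.
- by apply: derivable_sum => a; exact/diff_derivable.
rewrite derive_sum; last by move=> a; exact/diff_derivable.
congr (_ + _); apply: eq_bigr => a _.
rewrite -[cst _ * _]/(F x 0 a \*o Ct a) deriveMl //.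
exact/diff_derivable/(HC a).1.1.
Qed.

Lemma differentiable_tangent x : U x ->
  differentiable tangent x /\ forall h, 'd tangent x h = ('d V x h, h.1).
Proof.
move=> Ux; have [dfst dfstE] := is_diff_fst x.
have dV := HV Ux.
split=> [|h]; rewrite /tangent; first exact: differentiable_pair.
rewrite diff_pair //; congr pair; exact: (congr1 (fun g => g h) dfstE).
Qed.

Lemma differentiable_dLag v x : U x -> differentiable (dLag v) x.
Proof.
move=> Ux; have [dt _] := differentiable_tangent Ux; have Ot := HVO Ux.
apply: differentiableD.
  apply: (differentiable_comp (g := fun z => 'D_v L0t z)) => //.
  exact: (HL.2 v).1.
rewrite (_ : (fun y => \sum_(a < m) F y 0 a * 'D_v (Ct a) (tangent y)) =
  \sum_(a < m) ((fun y => F y 0 a) * ((fun z => 'D_v (Ct a) z) \o tangent)));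
  last by rewrite fct_sumE.
apply: differentiable_sum => a; apply: differentiableM.
  apply: (differentiable_comp (g := fun M : 'rV[R]_m => M 0 a)); first exact: HF.
  exact: differentiable_coord.
apply: (differentiable_comp (g := fun z => 'D_v (Ct a) z)) => //.
exact: ((HC a).2 v).1.
Qed.

Lemma momentum_pairing x d : U x ->
  'd (Lag (F x)) (tangent x) (d, 0) = dotr d x.2.
Proof.
move=> Ux; rewrite diff_qdot_sum; last exact: differentiable_Lag (HVO Ux).
by apply: eq_bigr => J _; rewrite Hp.
Qed.

Lemma constraint_tangency x a h : U x ->
  'd (Ct a) (tangent x) ('d V x h, h.1) = 0.
Proof.
move=> Ux; have [dt dtE] := differentiable_tangent Ux.
have dC : differentiable (Ct a) (tangent x) by exact: (HC a).1.1 _ (HVO Ux).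
have Ct0 : 'D_h (Ct a \o tangent) x = 0.
  rewrite (@near_eq_derive _ _ _ _ (cst 0)) ?derive_cst //.
  by apply: filterS (near_U Ux) => y Uy; rewrite /= /Ct Hc.
have dCt : differentiable (Ct a \o tangent) x := differentiable_comp dt dC.
by rewrite deriveE // diff_comp // /= dtE in Ct0.
Qed.

Lemma Honshell_Lag lam x : U x ->
  Honshell L0 V x = dotr (V x) x.2 - Lag lam (tangent x).
Proof.
move=> Ux; rewrite /Honshell /Lag /Lfull /=.
by rewrite [X in L0 _ _ + X]big1 ?addr0 // => a _; rewrite Hc // mulr0.
Qed.

Lemma is_derive_Honshell x h : U x -> is_derive x h (Honshell L0 V)
  (dotr (V x) h.2 - 'd (Lag (F x)) (tangent x) (0, h.1)).
Proof.
move=> Ux; set lam := F x.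
have [dt dtE] := differentiable_tangent Ux.
have dL : differentiable (Lag lam) (tangent x) := differentiable_Lag lam (HVO Ux).
have nearE : \forall y \near x,
    dotr (V y) y.2 - Lag lam (tangent y) = Honshell L0 V y.
  by apply: filterS (near_U Ux) => y Uy; rewrite (Honshell_Lag lam Uy).
apply: (near_eq_is_derive nearE).
have [dsnd dsndE] := is_diff_snd x.
have dV : derivable V x h by exact/diff_derivable/HV.
have dS : derivable snd x h by exact: diff_derivable.
have Dsnd : 'D_h snd x = h.2 by rewrite deriveE // dsndE.
have DV : 'D_h V x = 'd V x h by rewrite deriveE //; exact: HV.
have derive_Lag_tangent : is_derive x h (Lag lam \o tangent)
    ('d (Lag lam) (tangent x) ('d V x h, h.1)).
  have dc := differentiable_comp dt dL.
  apply: DeriveDef; first exact: diff_derivable.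
  rewrite deriveE; last exact: dc.
  rewrite -dtE; exact: (congr1 (fun l => l h) (diff_comp dt dL)).
apply: is_derive_eq (is_deriveB (is_derive_dotr (B := snd) dV dS) derive_Lag_tangent) _.
by rewrite Dsnd DV linear_pair_split momentum_pairing // opprD addrACA subrr add0r.
Qed.

Lemma Honshell_critical x0 : U x0 ->
  is_local_min (Honshell L0 V) x0 \/ is_local_max (Honshell L0 V) x0 ->
  V x0 = 0 /\ forall I, dq (Lfull L0 C (F x0)) I (V x0) x0.1 = 0.
Proof.
move=> Ux0 ext.
have grad0 h : dotr (V x0) h.2 - 'd (Lag (F x0)) (tangent x0) (0, h.1) = 0.
  apply: is_derive_local_extremum (is_derive_Honshell h Ux0) _ ext.
  by apply: filterS (near_U Ux0) => y Uy; have [] := is_derive_Honshell h Uy.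
have pair00 : ((0, 0) : P) = 0 by [].
split=> [|I].
  apply/rowP => J; have := grad0 (0, ebasis R J).
  by rewrite /= dotr_ebasis pair00 linear0 subr0 mxE.
have := grad0 (ebasis R I, 0); rewrite /= dotr0 sub0r => /eqP.
rewrite oppr_eq0 => /eqP <-.
by rewrite dq_diff //; exact: differentiable_Lag (HVO Ux0).
Qed.

Lemma Honshell_saddle x0 a I : U x0 -> V x0 = 0 ->
  dq (Lfull L0 C (F x0)) I (V x0) x0.1 = 0 -> dq (C a) I (V x0) x0.1 != 0 ->
  ~ is_local_min (Honshell L0 V) x0 /\ ~ is_local_max (Honshell L0 V) x0.
Proof.
move=> Ux0 Vx0 dqL dqC.
set wv : rV := \row_J dqdot (C a) J (V x0) x0.1.
have pair00 : ((0, 0) : P) = 0 by [].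
have dC : differentiable (Ct a) (tangent x0) by exact: (HC a).1.1 _ (HVO Ux0).
have dV : differentiable V x0 by exact: HV.
have dg : differentiable (fun y => dotr (V y) wv) x0.
  exact: differentiable_comp dV (differentiable_dotr_l wv _).
have dgE h : 'd (fun y => dotr (V y) wv) x0 h = - 'd (Ct a) (tangent x0) (0, h.1).
  have dVh : derivable V x0 h by exact: diff_derivable.
  have [_ DgE] := is_derive_dotr (B := cst wv) dVh (derivable_cst wv x0 h).
  rewrite derive_cst dotr0 addr0 (deriveE h dV) in DgE.
  apply: etrans (esym (deriveE h dg)) _; rewrite DgE.
  have dqdot_part : 'd (Ct a) (tangent x0) ('d V x0 h, 0) = dotr ('d V x0 h) wv.
    by rewrite [LHS]diff_qdot_sum //; apply: eq_bigr => J _; rewrite mxE.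
  have := constraint_tangency a h Ux0.
  by rewrite linear_pair_split dqdot_part => /eqP; rewrite addr_eq0 => /eqP.
have dL : differentiable (Lag (F x0)) (tangent x0).
  exact: differentiable_Lag (HVO Ux0).
rewrite (dq_diff I dL) in dqL; rewrite (dq_diff I dC) in dqC.
apply: (saddle_not_local_extremum (psi := - dLag (0, ebasis R I))
  (g := fun y => dotr (V y) wv) (u := (ebasis R I, 0)) (w := (0, wv))).
- apply: filterS (near_U Ux0) => y Uy; split.
    apply: is_derive_eq (is_derive_Honshell (ebasis R I, 0) Uy) _.
    by rewrite /= dotr0 sub0r diff_Lag_tangent // opprfctE.
  apply: is_derive_eq (is_derive_Honshell (0, wv) Uy) _.
  by rewrite /= pair00 linear0 subr0.
- exact/differentiableN/differentiable_dLag.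
- by rewrite opprfctE -diff_Lag_tangent // dqL oppr0.
- exact: dg.
- by rewrite /= Vx0 dot0r.
- by rewrite dgE pair00 linear0 oppr0.
- by rewrite dgE oppr_eq0.
Qed.
End OnShell.

Theorem theorem2 (R : realType) (n m : nat)
  (L0 : 'rV[R]_n -> 'rV[R]_n -> R)
  (C : 'I_m -> 'rV[R]_n -> 'rV[R]_n -> R)
  (Omega : set ('rV[R]_n * 'rV[R]_n))
  (U : set ('rV[R]_n * 'rV[R]_n))
  (V : 'rV[R]_n * 'rV[R]_n -> 'rV[R]_n)
  (F : 'rV[R]_n * 'rV[R]_n -> 'rV[R]_m) :
  (0 < m)%N -> (m <= n)%N ->
  (* regularity of the Lagrangian and the constraints on an open set of (qdot,q) *)
  open Omega ->
  C2_on Omega (fun z => L0 z.1 z.2) ->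
  (forall a, C2_on Omega (fun z => C a z.1 z.2)) ->
  (* U : open domain of the phase-space variables (q,p);
     V(q,p) = qdot(q,p,lambda)|_{lambda=F(q,p)}, F(q,p) = lambda solution *)
  open U ->
  (forall x, U x -> differentiable V x) ->
  (forall x, U x -> differentiable F x) ->
  (forall x, U x -> Omega (V x, x.1)) ->
  (* p_I = dL/dqdot^I at lambda = F *)
  (forall x, U x -> forall I : 'I_n,
      x.2 0 I = dqdot (Lfull L0 C (F x)) I (V x) x.1) ->
  (* constraints C_a = 0 hold *)
  (forall x, U x -> forall a, C a (V x) x.1 = 0) ->
  (* 1. nondegeneracy on the constraint surface *)
  (forall x, U x -> \det (Lhess L0 C (F x) (V x) x.1) != 0) ->
  (* 2. det M_ab != 0 on the constraint surface *)
  (forall x, U x -> \det (Mmat L0 C (F x) (V x) x.1) != 0) ->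
  (* 3. (a) or (b) *)
  ((~ exists x, [/\ U x, (forall a, C a (V x) x.1 = 0), V x = 0 &
        forall I, dq (Lfull L0 C (F x)) I (V x) x.1 = 0])
   \/
   (forall x, U x -> (forall a, C a (V x) x.1 = 0) -> V x = 0 ->
        (forall I, dq (Lfull L0 C (F x)) I (V x) x.1 = 0) ->
        exists a I, dq (C a) I (V x) x.1 != 0)) ->
  forall x0, U x0 ->
    ~ is_local_min (Honshell L0 V) x0 /\ ~ is_local_max (Honshell L0 V) x0.
Proof.
(* 0 < m <= n, the openness of Omega and conditions 1 and 2 only serve to
   produce V and F, which are given here. *)
move=> _ _ _ HL HC HU HV HF HVO Hp Hc _ _ cond3 x0 Ux0.
suff no_ext : ~ (is_local_min (Honshell L0 V) x0 \/ is_local_max (Honshell L0 V) x0).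
  by split=> ext; apply: no_ext; [left | right].
move=> ext.
have [Vx0 dqL] := Honshell_critical HL HC HU HV HVO Hp Hc Ux0 ext.
case: cond3 => [no_crit | regular].
  by apply: no_crit; exists x0; split=> //; exact: Hc.
have [a [I dqC]] := regular x0 Ux0 (Hc x0 Ux0) Vx0 dqL.
by have [] := Honshell_saddle HL HC HU HV HF HVO Hp Hc Ux0 Vx0 (dqL I) dqC; case: ext.
Qed.
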